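(* There are infinitely many pairwise non-isomorphic minimal non-matching tournaments.
   Context: A tournament is a finite, non-null, loopless directed graph in which for any two distinct vertices $u,v$ there is exactly one edge with both ends in $\{u,v\}$. Given an ordering $v_1,\dots,v_n$ of its vertices, a backedge is an edge from $v_j$ to $v_i$ with $j>i$; the ordering is a matching ordering if every vertex is the head or tail of at most one backedge. A matching tournament is a tournament having at least one matching ordering. A tournament $G$ is minimal non-matching if $G$ is not a matching tournament but every subtournament (induced on a nonempty proper subset of vertices) is a matching tournament. *)

From mathcomp Require Import all_boot.
Set Implicit Arguments. Unset Strict Implicit. Unset Printing Implicit Defensive.

(* A directed graph on a finite vertex type T is given by its edge relation
   e : rel T (e u v = there is an edge from u to v).  Since tournaments have
   at most one edge between any pair, no multi-edges need to be represented. *)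

Definition is_tournament_on (T : finType) (e : rel T) (S : {set T}) : Prop :=
  S != set0 /\
  (forall u, u \in S -> ~~ e u u) /\
  (forall u v, u \in S -> v \in S -> u != v -> (e u v (+) e v u)).

Definition is_tournament (T : finType) (e : rel T) : Prop :=
  is_tournament_on e [set: T].

Definition is_ordering (T : finType) (S : {set T}) (s : seq T) : Prop :=
  uniq s /\ (forall x, (x \in s) = (x \in S)).

Definition backedge (T : finType) (e : rel T) (s : seq T) (u v : T) : bool :=
  e u v && (index v s < index u s).

Definition matching_ordering (T : finType) (e : rel T) (S : {set T}) (s : seq T) : Prop :=
  is_ordering S s /\
  forall x, x \in S ->
    #|[set y in S | backedge e s x y || backedge e s y x]| <= 1.

Definition matching_on (T : finType) (e : rel T) (S : {set T}) : Prop :=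
  exists s : seq T, matching_ordering e S s.

Definition matching_tournament (T : finType) (e : rel T) : Prop :=
  is_tournament e /\ matching_on e [set: T].

Definition minimal_non_matching (T : finType) (e : rel T) : Prop :=
  is_tournament e /\
  ~ matching_on e [set: T] /\
  (forall S : {set T}, S != set0 -> S \proper [set: T] -> matching_on e S).

Definition digraph := {n : nat & rel 'I_n}.

Definition isomorphic (G H : digraph) : Prop :=
  exists f : 'I_(projT1 G) -> 'I_(projT1 H),
    bijective f /\ forall u v, projT2 H (f u) (f v) = projT2 G u v.

From mathcomp Require Import all_boot zify.

Set Implicit Arguments. Unset Strict Implicit. Unset Printing Implicit Defensive.

(* For m >= 1 let T_m be the tournament on 0 .. 2m+4 obtained from the natural
   order by reversing the arcs 0-4, y-(y+3) for odd 3 <= y <= 2m+1, and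
   (2m+1)-(2m+3).  In any ordering every cyclic triangle has a backedge, so a
   matching ordering picks a matching hitting all cyclic triangles.  The
   triangles 0 -> k -> 4 (k = 1, 2, 3) force 4-0 into it, and then the chain of
   triangles 2t+3 -> 2t+4 -> 2t+6 forces (2t+6)-(2t+3) for every t < m; the
   last triangle 2m+1 -> 2m+2 -> 2m+3 can then no longer be hit.  Deleting any
   vertex v breaks the chain: moving 0 behind 4 (if v is 1 or 2) and every odd
   y >= v - 1 behind y + 3 gives a matching ordering of T_m - v.  The T_m have
   distinct sizes, so they are pairwise non-isomorphic. *)

Definition key_inverted (T : Type) (e : rel T) (k : T -> nat) (x y : T) : bool :=
  (e x y && (k y < k x)) || (e y x && (k x < k y)).

Lemma key_invertedC (T : Type) (e : rel T) (k : T -> nat) x y :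
  key_inverted e k x y = key_inverted e k y x.
Proof. by rewrite /key_inverted orbC. Qed.

Section MatchingOrderings.
Variables (T : finType) (e : rel T).

Lemma ordering_by_key (S : {set T}) (k : T -> nat) : {in S &, injective k} ->
  exists s, is_ordering S s /\
    {in S &, forall x y, (index x s < index y s) = (k x < k y)}.
Proof.
move=> k_inj; pose s := sort (relpre k leq) (enum S).
have memS x : (x \in s) = (x \in S) by rewrite mem_sort mem_enum.
exists s; split; first by split=> //; rewrite sort_uniq enum_uniq.
have s_sorted : sorted (relpre k leq) s by apply: sort_sorted => x y; apply: leq_total.
have le_key x y : x \in S -> y \in S -> index x s <= index y s -> k x <= k y.
  move=> xS yS; apply: (sorted_leq_index _ _ s_sorted); rewrite ?memS //.
  - by move=> a b c /= /leq_trans; apply.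
  - by move=> a /=.
move=> x y xS yS; apply/idP/idP => [lt_idx | lt_k].
- rewrite ltn_neqAle le_key ?(ltnW lt_idx) // andbT.
  by apply: contraTneq lt_idx => /k_inj -> //; rewrite ltnn.
- by rewrite ltnNge; apply: contraTN lt_k => /le_key; rewrite -leqNgt; apply.
Qed.

Lemma matching_on_key (S : {set T}) (k : T -> nat) : {in S &, injective k} ->
  (forall x y z, x \in S -> y \in S -> z \in S ->
     key_inverted e k x y -> key_inverted e k x z -> y = z) ->
  matching_on e S.
Proof.
move=> k_inj inv_uniq; have [s [s_ord idxE]] := ordering_by_key k_inj.
exists s; split=> // x xS; apply/card_le1_eqP => y z.
have inv w : w \in S -> backedge e s x w || backedge e s w x -> key_inverted e k x w.
  by move=> wS; rewrite /backedge /key_inverted !idxE.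
by rewrite !inE => /andP[yS /(inv y yS) xy] /andP[zS /(inv z zS) xz]; apply: (inv_uniq x).
Qed.

Lemma cyclic_triangle_backedge (s : seq T) x y z :
  x \in s -> y \in s -> z \in s -> x != y -> e x y -> e y z -> e z x ->
  [|| backedge e s x y, backedge e s y z | backedge e s z x].
Proof.
move=> xs ys zs + exy eyz ezx; rewrite /backedge exy eyz ezx /=.
apply: contraR; rewrite !negb_or -!leqNgt => /and3P[le_xy le_yz le_zx].
apply/eqP; apply: (index_inj x xs ys); apply/eqP.
by rewrite eqn_leq le_xy (leq_trans le_yz le_zx).
Qed.

End MatchingOrderings.

Section ChainTournament.
Variable m : nat.
Hypothesis m_gt0 : 0 < m.

Definition back_arc (x y : nat) : bool :=
  [|| (x == 4) && (y == 0),
      [&& y %% 2 == 1, 3 <= y <= 2 * m + 1 & x == y + 3]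
    | (x == 2 * m + 3) && (y == 2 * m + 1)].

Definition chain_edge (x y : nat) : bool := back_arc x y || (x < y) && ~~ back_arc y x.

Lemma back_arcP x y : back_arc x y ->
  x = 4 /\ y = 0 \/ (y %% 2 = 1 /\ 3 <= y <= 2 * m + 1 /\ x = y + 3) \/
  x = 2 * m + 3 /\ y = 2 * m + 1.
Proof. rewrite /back_arc; lia. Qed.

Lemma back_arc_lt x y : back_arc x y -> y < x.
Proof. rewrite /back_arc; lia. Qed.

Lemma chain_edge_lt x y : x < y -> chain_edge x y = ~~ back_arc y x.
Proof.
move=> lt_xy; rewrite /chain_edge lt_xy /=.
by case: (boolP (back_arc x y)) => // /back_arc_lt; rewrite ltnNge ltnW.
Qed.

Lemma chain_edge_gt x y : y < x -> chain_edge x y = back_arc x y.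
Proof. by move=> lt_yx; rewrite /chain_edge ltnNge ltnW // orbF. Qed.

Lemma chain_edge_irr x : chain_edge x x = false.
Proof. by rewrite /chain_edge ltnn orbF; apply/negP => /back_arc_lt; rewrite ltnn. Qed.

Lemma chain_edge_total x y : x != y -> chain_edge x y (+) chain_edge y x.
Proof.
case: ltngtP => // [lt_xy | lt_yx] _.
- by rewrite chain_edge_lt // chain_edge_gt // addNb addbb.
- by rewrite chain_edge_gt // chain_edge_lt // addbN addbb.
Qed.

(* The ordering of the vertices other than v: 0 goes right behind 4 when v is
   1 or 2, and every shifted y goes right behind y + 3. *)
Definition shifted (v y : nat) : bool := [&& y %% 2 == 1, 3 <= y <= 2 * m + 1 & v <= y + 1].

Definition deletion_key (v x : nat) : nat :=
  if x == 0 then (if (v == 1) || (v == 2) then 9 else 0)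
  else if shifted v x then 2 * x + 7 else 2 * x.

Lemma deletion_key_inj v : injective (deletion_key v).
Proof. by move=> x y; rewrite /deletion_key /shifted; repeat (case: ifP => ?); lia. Qed.

(* The pairs x < y whose order the deletion key reverses against the edge. *)
Definition inverted_pair (v x y : nat) : bool :=
  [|| (x == 0) && (if (v == 1) || (v == 2) then (y == 1) || (y == 2) else y == 4),
      shifted v x && (y == x + 1)
    | [&& x != 0, ~~ shifted v x & back_arc y x]].

Lemma deletion_key_inversionP v x y : x < y -> deletion_key v y < deletion_key v x ->
  x = 0 /\ (v = 1 \/ v = 2) /\ (y = 1 \/ y = 2 \/ y = 4) \/
  shifted v x /\ (y = x + 1 \/ y = x + 2 \/ y = x + 3).
Proof. by rewrite /deletion_key /shifted; repeat (case: ifP => ?); lia. Qed.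

Lemma key_inverted_pair_lt v x y : x < y ->
  key_inverted chain_edge (deletion_key v) x y -> inverted_pair v x y.
Proof.
move=> lt_xy; rewrite /key_inverted chain_edge_lt // chain_edge_gt //.
case: (boolP (back_arc y x)) => [yx | nyx]; rewrite ?andbF ?andbT ?orbF /= => inv.
- move: inv; case: (back_arcP yx) => [[-> ->] | [[? [? ->]] | [-> ->]]];
    by rewrite /deletion_key /inverted_pair /shifted /back_arc /=;
       repeat (case: ifP => ?); lia.
- have [[? [? [? | [? | ?]]]] | [? [? | [? | ?]]]] := deletion_key_inversionP lt_xy inv;
    subst; move: inv nyx;
    by rewrite /deletion_key /inverted_pair /shifted /back_arc /=;
       repeat (case: ifP => ?); lia.
Qed.

Lemma key_inverted_pair v x y : key_inverted chain_edge (deletion_key v) x y ->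
  inverted_pair v x y || inverted_pair v y x.
Proof.
case: (ltngtP x y) => [lt_xy | lt_yx | ->].
- by move/(key_inverted_pair_lt lt_xy) ->.
- by rewrite key_invertedC => /(key_inverted_pair_lt lt_yx) ->; rewrite orbT.
- by rewrite /key_inverted ltnn !andbF.
Qed.

Lemma inverted_pair_unique v x y z : v < (2 * m + 4).+1 -> x != v -> y != v -> z != v ->
  inverted_pair v x y || inverted_pair v y x ->
  inverted_pair v x z || inverted_pair v z x -> y = z.
Proof.
rewrite /inverted_pair /shifted /back_arc => lt_v nxv nyv nzv.
by case: ifP => ?; case/orP => /or3P[] ? /orP[] /or3P[] ?; lia.
Qed.

Definition cyclic_triangle (a b c : nat) : bool :=
  [&& [&& a < (2 * m + 4).+1, b < (2 * m + 4).+1 & c < (2 * m + 4).+1], a != b,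
      chain_edge a b, chain_edge b c & chain_edge c a].

(* The backedges of a matching ordering, read on vertex numbers, form such a
   [cover]. *)
Section TriangleCover.
Variable cover : nat -> nat -> bool.
Hypothesis coverC : forall a b, cover a b = cover b a.
Hypothesis cover_uniq : forall a b c, cover a b -> cover a c -> b = c.
Hypothesis cover_triangle : forall a b c, cyclic_triangle a b c ->
  [|| cover a b, cover b c | cover c a].

Lemma cover_4_0 : cover 4 0.
Proof.
apply: contraT; rewrite coverC => n40.
have hit k : 0 < k < 4 -> cover 0 k || cover 4 k.
  move=> k_range; have /or3P[] : [|| cover 0 k, cover k 4 | cover 4 0].
    by apply: cover_triangle; rewrite /cyclic_triangle /chain_edge /back_arc; lia.
  - by move=> ->.
  - by rewrite coverC => ->; rewrite orbT.
  - by rewrite coverC (negbTE n40).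
move: (hit 1 isT) (hit 2 isT) (hit 3 isT) => /orP[] h1 /orP[] h2 /orP[] h3;
  first [ by case: (cover_uniq h1 h2) | by case: (cover_uniq h1 h3)
        | by case: (cover_uniq h2 h3) ].
Qed.

Lemma cover_step t : t < m -> (exists2 a, a < 2 * t + 3 & cover (2 * t + 4) a) ->
  cover (2 * t + 6) (2 * t + 3).
Proof.
move=> lt_tm [a lt_a c_a].
have /or3P[] : [|| cover (2 * t + 3) (2 * t + 4), cover (2 * t + 4) (2 * t + 6)
                 | cover (2 * t + 6) (2 * t + 3)].
  by apply: cover_triangle; rewrite /cyclic_triangle /chain_edge /back_arc; lia.
- by rewrite coverC => /(cover_uniq c_a); lia.
- by move/(cover_uniq c_a); lia.
- by [].
Qed.

Lemma cover_even t : t <= m -> exists2 a, a < 2 * t + 3 & cover (2 * t + 4) a.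
Proof.
elim: t => [|t IHt] le_tm; first by exists 0; last exact: cover_4_0.
exists (2 * t + 3); first lia.
have -> : 2 * t.+1 + 4 = 2 * t + 6 by lia.
by apply: cover_step => //; apply: IHt; lia.
Qed.

Lemma no_triangle_cover : False.
Proof.
have c_top : cover (2 * m + 1) (2 * m + 4).
  have := cover_step (t := m - 1) _ (cover_even (t := m - 1) _).
  have -> : 2 * (m - 1) + 6 = 2 * m + 4 by lia.
  have -> : 2 * (m - 1) + 3 = 2 * m + 1 by lia.
  by rewrite coverC; apply; lia.
have [b lt_b c_b] := cover_even (t := m - 1) (leq_subr _ _).
have {}c_b : cover (2 * m + 2) b by rewrite (_ : 2 * m + 2 = 2 * (m - 1) + 4) //; lia.
have /or3P[] : [|| cover (2 * m + 1) (2 * m + 2), cover (2 * m + 2) (2 * m + 3)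
                 | cover (2 * m + 3) (2 * m + 1)].
  by apply: cover_triangle; rewrite /cyclic_triangle /chain_edge /back_arc; lia.
- by move/(cover_uniq c_top); lia.
- by move/(cover_uniq c_b); lia.
- by rewrite coverC => /(cover_uniq c_top); lia.
Qed.

End TriangleCover.

Definition chain_tournament : rel 'I_(2 * m + 4).+1 := fun x y => chain_edge x y.

Lemma chain_tournament_is_tournament : is_tournament chain_tournament.
Proof.
split; first by apply/set0Pn; exists ord0; rewrite inE.
split=> [x _ | x y _ _ neq_xy]; first by rewrite /chain_tournament chain_edge_irr.
by apply: chain_edge_total; apply: contra neq_xy => /eqP/val_inj ->.
Qed.

Lemma chain_tournament_not_matching : ~ matching_on chain_tournament [set: 'I_(2 * m + 4).+1].
Proof.
move=> [s [[_ s_mem] s_match]].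
pose cover a b := [&& a < (2 * m + 4).+1, b < (2 * m + 4).+1 &
  backedge chain_tournament s (inord a) (inord b) ||
  backedge chain_tournament s (inord b) (inord a)].
apply: (@no_triangle_cover cover).
- by move=> a b; rewrite /cover andbCA orbC.
- move=> a b c /and3P[lt_a lt_b ab] /and3P[_ lt_c ac].
  have := s_match (inord a) (in_setT _); move/card_le1_eqP => /(_ (inord b) (inord c)).
  by rewrite !inE => /(_ ab ac) /(congr1 (@nat_of_ord _)); rewrite !inordK.
- move=> a b c /and5P[/and3P[lt_a lt_b lt_c] neq_ab eab ebc eca].
  have ins w : inord w \in s by rewrite s_mem in_setT.
  have neq_ord : inord a != inord b :> 'I_(2 * m + 4).+1.
    by apply: contra neq_ab => /eqP/(congr1 (@nat_of_ord _)); rewrite !inordK // => ->.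
  have := cyclic_triangle_backedge (e := chain_tournament) (ins a) (ins b) (ins c) neq_ord.
  rewrite /chain_tournament /= !inordK // => /(_ eab ebc eca).
  by rewrite /cover lt_a lt_b lt_c; case/or3P => ->; rewrite ?orbT.
Qed.

Lemma chain_tournament_proper_matching (S : {set 'I_(2 * m + 4).+1}) :
  S \proper [set: 'I_(2 * m + 4).+1] -> matching_on chain_tournament S.
Proof.
move=> /properP[_ [v _ vS]].
apply: (matching_on_key (k := fun x : 'I_(2 * m + 4).+1 => deletion_key v x)).
  by move=> x y _ _ /deletion_key_inj /val_inj.
have neq_v w : w \in S -> (w : nat) != v by apply: contraTneq => /val_inj ->.
move=> x y z xS yS zS /key_inverted_pair xy /key_inverted_pair xz.
by apply: val_inj; apply: (inverted_pair_unique _ (neq_v x xS) (neq_v y yS) (neq_v z zS) xy xz).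
Qed.

End ChainTournament.

Theorem theorem5p9 :
  exists F : nat -> digraph,
    (forall i, minimal_non_matching (projT2 (F i))) /\
    (forall i j, i <> j -> ~ isomorphic (F i) (F j)).
Proof.
exists (fun i => existT _ (2 * i.+1 + 4).+1 (@chain_tournament i.+1)); split.
- move=> i; split; first exact: chain_tournament_is_tournament.
  split; first exact: chain_tournament_not_matching.
  by move=> S _; apply: chain_tournament_proper_matching.
- move=> i j neq_ij [f [f_bij _]]; apply: neq_ij.
  by have := bij_eq_card f_bij; rewrite !card_ord /=; lia.
Qed.
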